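(* Let $\ket\psi$ be a pure $n$-qubit state, $t\ge1$, and $p_t$ the output distribution of the $t$-copy hidden cut circuit on $\ket\psi$. Then for every $\bm s\in\{0,1\}^n$, $$\mathbb E_{\bm x\sim p_t}[\bm x\cdot\bm s] = \tfrac12\bigl(1-P(\bm s)^t\bigr).$$
   Context: Subsystems are bitstrings $\bm s\in\{0,1\}^n$ (qubit $j$ included iff $s_j=1$); $\bm x\cdot\bm s\in\{0,1\}$ is the dot product mod 2. $\rho_{\bm s}=\mathrm{Tr}_{\bar{\bm s}}\ket\psi\bra\psi$ and $P(\bm s)=\mathrm{Tr}(\rho_{\bm s}^2)$ (with $P(\bm 0)=1$). $\mathrm{SWAP}_{\bm s}$ swaps the qubits of subsystem $\bm s$ between two copies of the $n$-qubit space. The $t$-copy hidden cut circuit: an $n$-qubit group register is initialized to $\ket{0^n}$ and a state register to $(\ket\psi\ket\psi)^{\otimes t}$; apply $H^{\otimes n}$ to the group register; apply $\sum_{\bm s}\ket{\bm s}\bra{\bm s}\otimes \mathrm{SWAP}_{\bm s}^{\otimes t}$; apply $H^{\otimes n}$ to the group register; measure the group register in the computational basis; $p_t$ denotes the resulting distribution. *)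

From HB Require Import structures.
From mathcomp Require Import all_boot all_order all_algebra.
Set Implicit Arguments.
Unset Strict Implicit.
Unset Printing Implicit Defensive.
Import Order.TTheory GRing.Theory Num.Theory.
Local Open Scope ring_scope.

(* Bitstrings in {0,1}^n: computational-basis labels of n qubits, and also
   subsystems s (qubit j included iff s j = true). *)
Definition bits (n : nat) := {ffun 'I_n -> bool}.

Definition dotb (n : nat) (x s : bits n) : bool :=
  odd (\sum_(j < n) (x j && s j)).

Section QC.
Variable C : numClosedFieldType.
Variable n : nat.

Definition normalized (psi : bits n -> C) : Prop :=
  \sum_(b : bits n) `|psi b| ^+ 2 = 1.

(* configuration a supported inside s (i.e. a basis label of subsystem s) *)
Definition supp_in (s a : bits n) : bool := [forall j, ~~ s j ==> ~~ a j].

Definition merge (s a c : bits n) : bits n :=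
  [ffun j => if s j then a j else c j].

(* reduced density matrix rho_s = Tr_{complement of s} |psi><psi|,
   indexed by basis labels a, a' of the subsystem s *)
Definition rho (psi : bits n -> C) (s a a' : bits n) : C :=
  \sum_(c : bits n | supp_in (finfun (fun j => ~~ s j)) c)
     psi (merge s a c) * (psi (merge s a' c))^*.

Definition purity (psi : bits n -> C) (s : bits n) : C :=
  \sum_(a : bits n | supp_in s a) \sum_(a' : bits n | supp_in s a')
     rho psi s a a' * rho psi s a' a.

(* SWAP_s on two copies of the n-qubit space, as a map on basis labels *)
Definition swap_lbl (s : bits n) (p : bits n * bits n) : bits n * bits n :=
  ([ffun j => if s j then p.2 j else p.1 j],
   [ffun j => if s j then p.1 j else p.2 j]).

(* state register of t copies of |psi>|psi>: basis labels *)
Definition streg (t : nat) := {ffun 'I_t -> bits n * bits n}.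

Definition swap_st (t : nat) (s : bits n) (beta : streg t) : streg t :=
  [ffun c => swap_lbl s (beta c)].

Definition init_st (t : nat) (psi : bits n -> C) (beta : streg t) : C :=
  \prod_(c < t) (psi (beta c).1 * psi (beta c).2).

(* joint vectors of group register (x) state register *)
Definition jvec (t : nat) := bits n -> streg t -> C.

Definition hadamard (g g' : bits n) : C :=
  (-1) ^+ dotb g g' / sqrtC (2 ^+ n).

Definition apply_H (t : nat) (v : jvec t) : jvec t :=
  fun g beta => \sum_(g' : bits n) hadamard g g' * v g' beta.

(* sum_s |s><s| (x) SWAP_s^{(x) t}; SWAP_s^{(x)t} is an involutive
   permutation of basis states, so (SWAP v)(beta) = v(SWAP beta) *)
Definition apply_CSWAP (t : nat) (v : jvec t) : jvec t :=
  fun g beta => v g (swap_st g beta).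

Definition init_joint (t : nat) (psi : bits n -> C) : jvec t :=
  fun g beta => (g == [ffun => false])%:R * init_st psi beta.

Definition hidden_cut_dist (t : nat) (psi : bits n -> C) (x : bits n) : C :=
  let v := apply_H (apply_CSWAP (apply_H (@init_joint t psi))) in
  \sum_(beta : streg t) `|v x beta| ^+ 2.

End QC.

Arguments hidden_cut_dist {C n} t psi x.

(* The circuit is Fourier analysis over Z_2^n.  After the first Hadamard layer
   and the controlled swaps, the second Hadamard layer makes the amplitude of
   outcome x a Walsh transform over the control g, so averaging the character
   (-1)^(x.s) against p_t correlates the branch g with the branch g + s.  By
   the group law of the swaps this correlation is the expectation of
   SWAP_s^(x)t in (|psi>|psi>)^(x)t, i.e. Tr(rho_s^2)^t, while for s = 0 it is
   1.  Since x.s = (1 - (-1)^(x.s))/2, the claim follows. *)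
From Pilot Require Import Defs.
From mathcomp Require Import all_boot all_order all_algebra.
From mathcomp Require Import ring.
Set Implicit Arguments. Unset Strict Implicit. Unset Printing Implicit Defensive.
Import Order.TTheory GRing.Theory Num.Theory.
Local Open Scope ring_scope.

Section Bits.
Variable n : nat.
Implicit Types g h s : bits n.

Definition bits0 : bits n := [ffun => false].
Definition bits_xor g h : bits n := [ffun j => g j (+) h j].

Lemma card_bits : #|{: bits n}| = (2 ^ n)%N.
Proof. by rewrite card_ffun card_bool card_ord. Qed.

Lemma bits_xorK g h s : (bits_xor (bits_xor g h) s == bits0) = (h == bits_xor g s).
Proof.
apply/eqP/eqP => [/ffunP E | ->]; apply/ffunP => j; rewrite !ffunE /=.
  by move: (E j); rewrite !ffunE; case: (g j); case: (h j); case: (s j).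
by case: (g j); case: (s j).
Qed.

Lemma swap_lblK s : involutive (swap_lbl s).
Proof.
by case=> a b; congr pair; apply/ffunP => j; rewrite !ffunE; case: (s j).
Qed.

Lemma swap_lbl_xor g s p : swap_lbl (bits_xor g s) (swap_lbl g p) = swap_lbl s p.
Proof.
by case: p => a b; congr pair; apply/ffunP => j; rewrite !ffunE /=;
  case: (s j); case: (g j).
Qed.

Lemma swap_lbl0 p : swap_lbl bits0 p = p.
Proof. by case: p => a b; congr pair; apply/ffunP => j; rewrite !ffunE. Qed.

Variable t : nat.

Lemma swap_stK s : involutive (@swap_st n t s).
Proof. by move=> b; apply/ffunP => c; rewrite !ffunE swap_lblK. Qed.

Lemma swap_st_xor g s b : swap_st (bits_xor g s) (swap_st g b) = swap_st s b :> streg n t.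
Proof. by apply/ffunP => c; rewrite !ffunE swap_lbl_xor. Qed.

End Bits.

Section Walsh.
Variables (R : numFieldType) (n : nat).
Implicit Types x g h : bits n.

Definition walsh x g : R := (-1) ^+ dotb x g.

Lemma walshE x g : walsh x g = \prod_(j < n) (-1) ^+ (x j && g j).
Proof. by rewrite /walsh /dotb signr_odd expr_sum. Qed.

Lemma walshC x g : walsh x g = walsh g x.
Proof. by rewrite !walshE; apply: eq_bigr => j _; rewrite andbC. Qed.

Lemma walsh_xor x g h : walsh x (bits_xor g h) = walsh x g * walsh x h.
Proof.
rewrite !walshE -big_split; apply: eq_bigr => j _ /=; rewrite ffunE.
by case: (x j); case: (g j); case: (h j); rewrite /= ?mulrNN ?mulr1 ?mul1r.
Qed.

Lemma walsh0 x : walsh x (bits0 n) = 1.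
Proof. by rewrite walshE big1 // => j _; rewrite ffunE andbF. Qed.

Lemma walsh_dotb x s : (dotb x s)%:R = (1 - walsh x s) / 2.
Proof.
rewrite /walsh; case: (dotb x s) => /=; rewrite ?expr1 ?expr0 ?subrr ?mul0r //.
by rewrite opprK -mulr2n divff // pnatr_eq0.
Qed.

(* A nonzero g has a coordinate j; flipping x_j pairs the terms with opposite signs. *)
Lemma sum_walsh g : \sum_x walsh x g = (g == bits0 n)%:R * 2 ^+ n.
Proof.
have [->|nz_g] := eqVneq g (bits0 n).
  under eq_bigr do rewrite walsh0.
  by rewrite sumr_const card_bits mul1r natrX.
rewrite mul0r.
have [j gj] : exists j, g j.
  apply/existsP; apply: contra_neqT nz_g => /existsPn g0.
  by apply/ffunP => j; rewrite ffunE; apply/negbTE/g0.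
pose e : bits n := [ffun k => k == j].
have walsh_e : walsh e g = -1.
  rewrite walshE (bigD1 j) //= ffunE eqxx gj big1 ?mulr1 // => k kj.
  by rewrite ffunE (negbTE kj).
have flip_inj : injective (fun x => bits_xor x e).
  move=> x y /ffunP E; apply/ffunP => k; move: (E k); rewrite !ffunE.
  by case: (x k); case: (y k); case: (_ == _).
set S := \sum_x walsh x g.
have SN : S = - S.
  rewrite {1}/S (reindex_inj flip_inj) -sumrN; apply: eq_bigr => x _ /=.
  by rewrite walshC walsh_xor [walsh g e]walshC walsh_e mulrN1 walshC.
have : S *+ 2 = 0 by rewrite mulr2n {1}SN addNr.
by rewrite -mulr_natr => /eqP; rewrite mulf_eq0 pnatr_eq0 orbF => /eqP.
Qed.

End Walsh.

Section WalshTransform.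
Variables (C : numClosedFieldType) (n : nat).
Implicit Types x g h s : bits n.

Lemma conj_walsh x g : (walsh C x g)^* = walsh C x g.
Proof. by rewrite rmorphXn rmorphN1. Qed.

(* Wiener-Khinchin for the Walsh transform. *)
Lemma sum_normX_walsh_transform (f : bits n -> C) s :
  \sum_x `|\sum_g walsh C x g * f g| ^+ 2 * walsh C x s
    = 2 ^+ n * \sum_g f g * (f (bits_xor g s))^*.
Proof.
have expand x : `|\sum_g walsh C x g * f g| ^+ 2 * walsh C x s
    = \sum_g \sum_h walsh C x (bits_xor (bits_xor g h) s) * (f g * (f h)^*).
  rewrite normCK rmorph_sum big_distrl mulr_suml; apply: eq_bigr => g _.
  rewrite big_distrr mulr_suml; apply: eq_bigr => h _ /=.
  by rewrite rmorphM /= conj_walsh !walsh_xor; ring.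
under eq_bigr do rewrite expand.
rewrite exchange_big mulr_sumr; apply: eq_bigr => g _ /=.
rewrite exchange_big; under eq_bigr do rewrite -mulr_suml sum_walsh bits_xorK.
rewrite (bigD1 (bits_xor g s)) //= eqxx mul1r big1 ?addr0 // => h /negbTE ->.
by rewrite !mul0r.
Qed.

End WalshTransform.

Section Subsystems.
Variable n : nat.
Implicit Types s a c : bits n.

Definition bits_compl s : bits n := [ffun j => ~~ s j].
Definition bits_mask s b : bits n := [ffun j => s j && b j].

Lemma sum_bits_merge (V : nmodType) s (G : bits n -> V) :
  \sum_b G b
    = \sum_(a | supp_in s a) \sum_(c | supp_in (bits_compl s) c) G (Defs.merge s a c).
Proof.
rewrite pair_big_dep /=.
rewrite (reindex_onto (fun p : bits n * bits n => Defs.merge s p.1 p.2)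
                      (fun b => (bits_mask s b, bits_mask (bits_compl s) b))) /=;
  last by move=> b _; apply/ffunP => j; rewrite !ffunE /=; case: (s j).
apply: eq_bigl => [[a c]] /=.
apply/eqP/andP => [[/ffunP Ea /ffunP Ec] | [/forallP Ha /forallP Hc]].
  by split; apply/forallP => j; [move: (Ea j) | move: (Ec j)];
    rewrite !ffunE /=; case: (s j) => //= <-.
congr pair; apply/ffunP => j; rewrite !ffunE /=.
  by move: (Ha j); case: (s j) => //= /negbTE.
by move: (Hc j); rewrite ffunE; case: (s j) => //= /negbTE.
Qed.

Lemma swap_lbl_merge s a c a' c' :
  swap_lbl s (Defs.merge s a c, Defs.merge s a' c')
    = (Defs.merge s a' c, Defs.merge s a c').
Proof. by congr pair; apply/ffunP => j; rewrite !ffunE; case: (s j). Qed.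

End Subsystems.

Section HiddenCut.
Variables (C : numClosedFieldType) (n : nat) (psi : bits n -> C).
Implicit Types x g s : bits n.

Definition swap_overlap s : C :=
  \sum_a \sum_b
    psi a * psi b * (psi (swap_lbl s (a, b)).1 * psi (swap_lbl s (a, b)).2)^*.

Definition swap_overlap_copies t s : C :=
  \sum_(b : streg n t) init_st psi b * (init_st psi (swap_st s b))^*.

Lemma hidden_cut_amplitude t x b :
  apply_H (apply_CSWAP (apply_H (@init_joint C n t psi))) x b
    = (2 ^+ n)^-1 * \sum_g walsh C x g * init_st psi (swap_st g b).
Proof.
rewrite /apply_H /apply_CSWAP /init_joint mulr_sumr; apply: eq_bigr => g _.
rewrite (bigD1 (bits0 n)) //= eqxx big1 ?addr0 => [|g' /negbTE ->]; last first.
  by rewrite mul0r mulr0.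
rewrite /hadamard -[(-1) ^+ dotb x g]/(walsh C x g) -[(-1) ^+ _]/(walsh C g (bits0 n)).
have sqrtN : (sqrtC (2 ^+ n))^-1 * (sqrtC (2 ^+ n))^-1 = (2 ^+ n)^-1 :> C.
  by rewrite -invfM -expr2 sqrtCK.
by rewrite walsh0 -sqrtN /=; ring.
Qed.

Lemma swap_overlap_copies_shift t g s :
  \sum_(b : streg n t) init_st psi (swap_st g b)
                       * (init_st psi (swap_st (bits_xor g s) b))^*
    = swap_overlap_copies t s.
Proof.
rewrite (reindex_inj (can_inj (swap_stK g))) /=.
by apply: eq_bigr => b _; rewrite swap_stK swap_st_xor.
Qed.

Lemma hidden_cut_walsh_moment t s :
  \sum_x hidden_cut_dist t psi x * walsh C x s = swap_overlap_copies t s.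
Proof.
have N_gt0 : 0 < 2 ^+ n :> C by rewrite exprn_gt0 ?ltr0n.
under eq_bigr => x _ do rewrite mulr_suml.
rewrite exchange_big /=.
under eq_bigr => b _ do under eq_bigr => x _ do
  rewrite hidden_cut_amplitude normrM exprMn -mulrA.
under eq_bigr => b _ do rewrite -mulr_sumr sum_normX_walsh_transform mulrA.
rewrite -mulr_sumr exchange_big /=.
under eq_bigr do rewrite swap_overlap_copies_shift.
rewrite sumr_const card_bits -[swap_overlap_copies t s *+ _]mulr_natr natrX.
rewrite ger0_norm ?invr_ge0 ?ltW //.
by field; rewrite gt_eqF.
Qed.

Lemma swap_overlap_copiesE t s : swap_overlap_copies t s = swap_overlap s ^+ t.
Proof.
have -> : swap_overlap s ^+ t = \prod_(c < t) swap_overlap s.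
  by rewrite prodr_const card_ord.
rewrite /swap_overlap_copies /swap_overlap pair_bigA bigA_distr_bigA /=.
apply: eq_bigr => b _; rewrite /init_st rmorph_prod -big_split /=.
by apply: eq_bigr => c _; rewrite ffunE; case: (b c).
Qed.

Lemma swap_overlap_purity s : swap_overlap s = purity psi s.
Proof.
rewrite /swap_overlap (sum_bits_merge s).
under eq_bigr => a _ do under eq_bigr => c _ do rewrite (sum_bits_merge s).
rewrite /purity /rho; apply: eq_bigr => a _.
under [RHS]eq_bigr => a' _ do rewrite big_distrl.
rewrite [RHS]exchange_big; apply: eq_bigr => c _.
apply: eq_bigr => a' _; rewrite big_distrr; apply: eq_bigr => c' _.
by rewrite swap_lbl_merge rmorphM mulrACA.
Qed.

Lemma swap_overlap0 : normalized psi -> swap_overlap (bits0 n) = 1.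
Proof.
move=> psi1; rewrite /swap_overlap.
rewrite -[1]mulr1 -{1}psi1 -psi1 big_distrl; apply: eq_bigr => a _.
rewrite big_distrr; apply: eq_bigr => b _.
by rewrite swap_lbl0 /= !normCK rmorphM mulrACA.
Qed.

End HiddenCut.

Theorem mainTheorem7 (C : numClosedFieldType) (n t : nat)
  (psi : bits n -> C) (s : bits n) :
  normalized psi -> (1 <= t)%N ->
  \sum_(x : bits n) hidden_cut_dist t psi x * (dotb x s)%:R
    = (1 - purity psi s ^+ t) / 2.
Proof.
move=> psi1 _.
have -> : \sum_x hidden_cut_dist t psi x * (dotb x s)%:R
    = (\sum_x hidden_cut_dist t psi x * walsh C x (bits0 n)
       - \sum_x hidden_cut_dist t psi x * walsh C x s) / 2.
  rewrite -sumrB mulr_suml; apply: eq_bigr => x _.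
  by rewrite walsh0 walsh_dotb mulrA mulrBr mulr1.
rewrite !hidden_cut_walsh_moment !swap_overlap_copiesE.
by rewrite (swap_overlap0 psi1) swap_overlap_purity expr1n.
Qed.
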